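(* Let $\alpha\in\mathbb{N}_0$. (i) For every $y\in C^{(2\alpha+4)}(0,\infty)$ and $x>0$, $$(-1)^{\alpha+1}\prod_{j=0}^{\alpha+1}\Big\{L_{2,x}^{2j-1}-\frac{2j}{x}-j\Big\}y(x)=(-1)^{\alpha+1}L_{2,x}^{-1}\prod_{j=1}^{\alpha+1}\big\{L_{2,x}^{\alpha+1}-j\big\}y(x).$$ (ii) Denoting by $\mathcal{L}$ the operator on the right-hand side of (i), for every $n\in\mathbb{N}$ one has $\big[\mathcal{L}+(n)_{\alpha+2}\big]T_n^{\alpha}(x)=0$.
   Context: For real $\gamma$ (including $-1$), $L_{2,x}^{\gamma}=xD_x^2+(\gamma+1-x)D_x$, so $L_{2,x}^{-1}=x[D_x^2-D_x]$. The product $\prod_{j=a}^{b}\{A_j\}$ means $A_b\cdots A_a$, factors applied successively to the function on the right in increasing order of $j$. $(a)_k$ is the Pochhammer symbol. $L_n^{\gamma}(x)=\frac{(\gamma+1)_n}{n!}{}_1F_1(-n;\gamma+1;x)$ are the Laguerre polynomials, and for $n\ge1$, $T_n^{\alpha}(x)=-t_n^{\alpha}\,x\,L_{n-1}^{\alpha+2}(x)$ with $t_n^{\alpha}=(\alpha+2)_{n-1}/n!$. *)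

From Stdlib Require Import Arith Reals Lra Lia ClassicalEpsilon.
Open Scope R_scope.

Definition op := (R -> R) -> (R -> R).

(* The derivative of f at x: the (unique) l with derivable_pt_lim f x l,
   and 0 if f is not differentiable at x. *)
Definition Dx (f : R -> R) (x : R) : R :=
  match excluded_middle_informative (exists l, derivable_pt_lim f x l) with
  | left H => proj1_sig (constructive_indefinite_description _ H)
  | right _ => 0
  end.

Fixpoint Dn (k : nat) (f : R -> R) : R -> R :=
  match k with O => f | S k' => Dx (Dn k' f) end.

Definition Ck_pos (k : nat) (f : R -> R) : Prop :=
  (forall j, (j < k)%nat -> forall x, 0 < x -> exists l, derivable_pt_lim (Dn j f) x l)
  /\ (forall x, 0 < x -> continuity_pt (Dn k f) x).

Definition L2 (gamma : R) : op :=
  fun f x => x * Dn 2 f x + (gamma + 1 - x) * Dx f x.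

(* compop A a k = A_(a+k-1) o ... o A_a  (A_a applied first);
   so prod_{j=a}^{b} {A_j} = compop A a (b - a + 1). *)
Fixpoint compop (A : nat -> op) (a k : nat) : op :=
  match k with
  | O => fun f => f
  | S k' => fun f => A (a + k')%nat (compop A a k' f)
  end.

Fixpoint poch (a : R) (k : nat) : R :=
  match k with O => 1 | S k' => poch a k' * (a + INR k') end.

Definition F11_term (n : nat) (b x : R) : R :=
  sum_f_R0 (fun k => poch (- INR n) k / poch b k * x ^ k / INR (fact k)) n.

Definition laguerre (n : nat) (gamma x : R) : R :=
  poch (gamma + 1) n / INR (fact n) * F11_term n (gamma + 1) x.

Definition tcoef (n alpha : nat) : R := poch (INR alpha + 2) (n - 1) / INR (fact n).
Definition Tpoly (n alpha : nat) (x : R) : R :=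
  - tcoef n alpha * x * laguerre (n - 1) (INR alpha + 2) x.

Definition Afac (j : nat) : op :=
  fun f x => L2 (2 * INR j - 1) f x - (2 * INR j / x) * f x - INR j * f x.

Definition Bfac (alpha : nat) (j : nat) : op :=
  fun f x => L2 (INR alpha + 1) f x - INR j * f x.

Definition LHSop (alpha : nat) : op := compop Afac 0 (alpha + 2).

Definition RHSop (alpha : nat) : op :=
  fun f => L2 (-1) (compop (Bfac alpha) 1 (alpha + 1) f).

Definition calL (alpha : nat) : op :=
  fun f x => (-1) ^ (alpha + 1) * RHSop alpha f x.

(* Write [M = D - 1].  The operators factor through powers of [x]:
   [L^{-1} = x D M], [L^1 - 1 = D M x] and [(L^{-k} - 1) x^k = D x^{k+1} M], while
   [D (L^c - d) = (L^{c+1} - (d+1)) D] and [M (L^c - d) = (L^{c+1} - d) M].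
   Pushing factors through these rules turns both sides of (i) into
   [x D^{a+2} M^{a+2} x^{a+1}]: the left product by induction on its length, the right
   one through [prod_{j=1}^{k} {L^k - j} = D^k M^k x^k], which is obtained from the case
   [L^0] by conjugating with [M], onto on [(0, oo)].  For (ii), [T_n = x q] with
   [L^{a+2} q = (1 - n) q] by the Laguerre equation, hence
   [D^{a+2} M^{a+2} x^{a+2} q = prod_{j=1}^{a+2} (1 - n - j) q = (-1)^a (n)_{a+2} q]. *)

From Stdlib Require Import Arith Reals Lra Lia.
From Stdlib Require Import ClassicalEpsilon FunctionalExtensionality Setoid Morphisms.
From Coquelicot Require Import Coquelicot.
Open Scope R_scope.

Definition eqpos (f g : R -> R) : Prop := forall x, 0 < x -> f x = g x.
Infix "=+" := eqpos (at level 70, no associativity).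

Definition derivable_pos (f : R -> R) : Prop :=
  forall x, 0 < x -> exists l, derivable_pt_lim f x l.

Definition derivable_upto (k : nat) (f : R -> R) : Prop :=
  forall j, (j < k)%nat -> derivable_pos (Dn j f).

#[local] Instance eqpos_equiv : Equivalence eqpos.
Proof.
  split.
  - now intros f x _.
  - intros f g E x Hx; symmetry; auto.
  - intros f g h E1 E2 x Hx; rewrite E1, E2; auto.
Qed.

Lemma Dx_of_lim f x l : derivable_pt_lim f x l -> Dx f x = l.
Proof.
  intro H. unfold Dx. destruct excluded_middle_informative as [E|N].
  - destruct constructive_indefinite_description as [l' H']; simpl.
    eapply uniqueness_limite; eauto.
  - exfalso; eauto.
Qed.

Lemma lim_Dx f x : (exists l, derivable_pt_lim f x l) -> derivable_pt_lim f x (Dx f x).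
Proof. intros [l H]. now rewrite (Dx_of_lim _ _ _ H). Qed.

Lemma derivable_pt_lim_eqpos f g x l :
  f =+ g -> 0 < x -> derivable_pt_lim f x l -> derivable_pt_lim g x l.
Proof.
  intros E Hx H eps Heps. destruct (H eps Heps) as [d Hd].
  assert (Hm : 0 < Rmin d x) by (apply Rmin_pos; [apply cond_pos | lra]).
  exists (mkposreal _ Hm). intros h Hh Hhd; simpl in Hhd.
  assert (Hhx : Rabs h < x) by (eapply Rlt_le_trans; [exact Hhd | apply Rmin_r]).
  apply Rabs_def2 in Hhx.
  rewrite <- (E x Hx), <- (E (x + h)) by lra.
  apply Hd; auto. eapply Rlt_le_trans; [exact Hhd | apply Rmin_l].
Qed.

#[local] Instance Dx_eqpos : Proper (eqpos ==> eqpos) Dx.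
Proof.
  intros f g E x Hx.
  destruct (excluded_middle_informative (exists l, derivable_pt_lim f x l)) as [[l Hl] | Nf].
  - rewrite (Dx_of_lim _ _ _ Hl). symmetry. apply Dx_of_lim.
    exact (derivable_pt_lim_eqpos f g x l E Hx Hl).
  - assert (Ng : ~ exists l, derivable_pt_lim g x l).
    { intros [l Hl]; apply Nf; exists l.
      eapply derivable_pt_lim_eqpos; [symmetry; exact E | exact Hx | exact Hl]. }
    unfold Dx. destruct excluded_middle_informative; [contradiction |].
    destruct excluded_middle_informative; [contradiction | reflexivity].
Qed.

#[local] Instance Dn_eqpos k : Proper (eqpos ==> eqpos) (Dn k).
Proof. induction k; intros f g E; simpl; auto. now rewrite E. Qed.

Lemma Dn_S_inner k f : Dn (S k) f = Dn k (Dx f).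
Proof. induction k; simpl; auto. simpl in IHk. now rewrite IHk. Qed.

#[local] Instance derivable_pos_eqpos : Proper (eqpos ==> iff) derivable_pos.
Proof.
  intros f g E; split; intros H x Hx; destruct (H x Hx) as [l Hl]; exists l;
    eapply derivable_pt_lim_eqpos; eauto; now symmetry.
Qed.

#[local] Instance derivable_upto_eqpos k : Proper (eqpos ==> iff) (derivable_upto k).
Proof. intros f g E; split; intros H j Hj; [rewrite <- E | rewrite E]; auto. Qed.

Ltac derive :=
  repeat first
    [ apply derivable_pt_lim_minus | apply derivable_pt_lim_plus | apply derivable_pt_lim_opp
    | apply derivable_pt_lim_mult | apply derivable_pt_lim_id | apply derivable_pt_lim_const
    | apply derivable_pt_lim_pow | apply lim_Dx ].

Lemma derivable_pt_lim_eq f x l l' : derivable_pt_lim f x l -> l = l' -> derivable_pt_lim f x l'.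
Proof. now intros H <-. Qed.

Lemma derivable_upto_pos k f : derivable_upto (S k) f -> derivable_pos f.
Proof. intros H; apply (H 0%nat); lia. Qed.

Lemma derivable_upto_S k f :
  derivable_upto (S k) f <-> derivable_pos f /\ derivable_upto k (Dx f).
Proof.
  split.
  - intros H; split; [exact (derivable_upto_pos k f H) |].
    intros j Hj; rewrite <- Dn_S_inner; apply H; lia.
  - intros [H0 HS] [|j] Hj; [exact H0 |]. rewrite Dn_S_inner; apply HS; lia.
Qed.

Lemma derivable_upto_le j k f : (j <= k)%nat -> derivable_upto k f -> derivable_upto j f.
Proof. intros Hjk H i Hi; apply H; lia. Qed.

Ltac upto_le H := eapply derivable_upto_le; [| exact H]; lia.

Lemma derivable_upto_Dn a k f : derivable_upto (a + k) f -> derivable_upto k (Dn a f).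
Proof.
  revert f; induction a as [|a IH]; intros f H; [exact H |].
  rewrite Dn_S_inner; apply IH. now apply derivable_upto_S in H.
Qed.

Lemma derivable_upto_add k : forall f g,
  derivable_upto k f -> derivable_upto k g -> derivable_upto k (fun t => f t + g t).
Proof.
  induction k as [|k IH]; intros f g Hf Hg; [intros j Hj; lia |].
  apply derivable_upto_S in Hf as [Hf1 Hf2]; apply derivable_upto_S in Hg as [Hg1 Hg2].
  apply derivable_upto_S; split.
  - intros x Hx; eexists; derive; auto.
  - assert (E : Dx (fun t => f t + g t) =+ (fun t => Dx f t + Dx g t)).
    { intros x Hx; apply Dx_of_lim; derive; auto. }
    rewrite E; auto.
Qed.

Inductive is_poly : (R -> R) -> Prop :=
| is_poly_const c : is_poly (fun _ => c)
| is_poly_id : is_poly (fun t => t)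
| is_poly_add f g : is_poly f -> is_poly g -> is_poly (fun t => f t + g t)
| is_poly_mul f g : is_poly f -> is_poly g -> is_poly (fun t => f t * g t).

Lemma is_poly_pow k : is_poly (fun t => t ^ k).
Proof. induction k; simpl; constructor; auto; constructor. Qed.

Lemma is_poly_derivative a :
  is_poly a -> exists a', is_poly a' /\ forall t, derivable_pt_lim a t (a' t).
Proof.
  induction 1 as [c | | f g _ [f' [Pf Hf]] _ [g' [Pg Hg]] | f g Pf0 [f' [Pf Hf]] Pg0 [g' [Pg Hg]]].
  - exists (fun _ => 0); split; [constructor | intros; derive].
  - exists (fun _ => 1); split; [constructor | intros; derive].
  - exists (fun t => f' t + g' t); split; [now constructor | intros; derive; auto].
  - exists (fun t => f' t * g t + f t * g' t); split; [repeat constructor; auto |].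
    intros; derive; auto.
Qed.

Lemma derivable_upto_mul_poly k : forall a f,
  is_poly a -> derivable_upto k f -> derivable_upto k (fun t => a t * f t).
Proof.
  induction k as [|k IH]; intros a f Ha Hf; [intros j Hj; lia |].
  destruct (is_poly_derivative a Ha) as [a' [Ha' Hd]].
  assert (Hfk : derivable_upto k f) by (upto_le Hf).
  apply derivable_upto_S in Hf as [Hf1 Hf2].
  apply derivable_upto_S; split.
  - intros x Hx; eexists; derive; eauto.
  - assert (E : Dx (fun t => a t * f t) =+ (fun t => a' t * f t + a t * Dx f t)).
    { intros x Hx; apply Dx_of_lim; derive; auto. }
    rewrite E; apply derivable_upto_add; auto.
Qed.

Lemma derivable_upto_const k c : derivable_upto k (fun _ => c).
Proof.
  revert c; induction k as [|k IH]; intros c; [intros j Hj; lia |].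
  apply derivable_upto_S; split; [intros x _; eexists; derive |].
  assert (E : Dx (fun _ => c) =+ (fun _ => 0)) by (intros x _; apply Dx_of_lim; derive).
  now rewrite E.
Qed.

Lemma derivable_upto_poly k a : is_poly a -> derivable_upto k a.
Proof.
  intros Ha. assert (E : (fun t => a t * 1) =+ a) by (intros t _; ring).
  rewrite <- E; apply derivable_upto_mul_poly; auto using derivable_upto_const.
Qed.

(** * The operators [D - 1], [L^c - d] and multiplication by powers of [x] *)

Definition Dm1 (f : R -> R) : R -> R := fun t => Dx f t - f t.

Fixpoint Dm1n (k : nat) (f : R -> R) : R -> R :=
  match k with O => f | S k' => Dm1 (Dm1n k' f) end.

Definition Lsub (c d : R) (f : R -> R) : R -> R := fun t => L2 c f t - d * f t.

Definition xpow (k : nat) (f : R -> R) : R -> R := fun t => t ^ k * f t.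

Definition xmul (f : R -> R) : R -> R := fun t => t * f t.

Definition Lprod (k : nat) (c : R) : op := compop (fun j => Lsub c (INR j)) 1 k.

Lemma Dm1n_S_inner k f : Dm1n (S k) f = Dm1n k (Dm1 f).
Proof. induction k; simpl; auto. simpl in IHk. now rewrite IHk. Qed.

#[local] Instance Dm1_eqpos : Proper (eqpos ==> eqpos) Dm1.
Proof. intros f g E x Hx; unfold Dm1; now rewrite (Dx_eqpos f g E x Hx), (E x Hx). Qed.

#[local] Instance Dm1n_eqpos k : Proper (eqpos ==> eqpos) (Dm1n k).
Proof. induction k; intros f g E; simpl; auto. now rewrite E. Qed.

#[local] Instance L2_eqpos c : Proper (eqpos ==> eqpos) (L2 c).
Proof.
  intros f g E x Hx; unfold L2.
  now rewrite (Dn_eqpos 2 f g E x Hx), (Dx_eqpos f g E x Hx).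
Qed.

#[local] Instance Lsub_eqpos c d : Proper (eqpos ==> eqpos) (Lsub c d).
Proof. intros f g E x Hx; unfold Lsub; now rewrite (L2_eqpos c f g E x Hx), (E x Hx). Qed.

#[local] Instance xpow_eqpos k : Proper (eqpos ==> eqpos) (xpow k).
Proof. intros f g E x Hx; unfold xpow; now rewrite (E x Hx). Qed.

#[local] Instance xmul_eqpos : Proper (eqpos ==> eqpos) xmul.
Proof. intros f g E x Hx; unfold xmul; now rewrite (E x Hx). Qed.

#[local] Instance Lprod_eqpos k c : Proper (eqpos ==> eqpos) (Lprod k c).
Proof. induction k; intros f g E; simpl; auto. apply Lsub_eqpos, IHk, E. Qed.

#[local] Instance Afac_eqpos j : Proper (eqpos ==> eqpos) (Afac j).
Proof. intros f g E x Hx; unfold Afac; now rewrite (L2_eqpos _ f g E x Hx), (E x Hx). Qed.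

Lemma derivable_upto_Dm1 k f : derivable_upto (S k) f -> derivable_upto k (Dm1 f).
Proof.
  intros H. assert (E : Dm1 f =+ (fun t => Dx f t + -1 * f t)) by (intros x _; unfold Dm1; ring).
  rewrite E; apply derivable_upto_add.
  - now apply derivable_upto_S in H.
  - apply (derivable_upto_mul_poly k (fun _ => -1)); [constructor | upto_le H].
Qed.

Lemma derivable_upto_Dm1n b k f : derivable_upto (b + k) f -> derivable_upto k (Dm1n b f).
Proof.
  revert f; induction b as [|b IH]; intros f H; [exact H |].
  rewrite Dm1n_S_inner; apply IH, derivable_upto_Dm1, H.
Qed.

Lemma derivable_upto_xpow n k f : derivable_upto k f -> derivable_upto k (xpow n f).
Proof. intros H; apply derivable_upto_mul_poly; auto using is_poly_pow. Qed.

Lemma derivable_upto_xmul k f : derivable_upto k f -> derivable_upto k (xmul f).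
Proof. intros H; apply derivable_upto_mul_poly; auto using is_poly_id. Qed.

Lemma derivable_upto_Lsub k c d f :
  derivable_upto (S (S k)) f -> derivable_upto k (Lsub c d f).
Proof.
  intros H.
  assert (E : Lsub c d f =+
              (fun t => t * Dx (Dx f) t + ((c + 1 + -1 * t) * Dx f t + - d * f t)))
    by (intros x _; unfold Lsub, L2; simpl; ring).
  assert (H0 : derivable_upto k f) by (upto_le H).
  apply derivable_upto_S in H as [_ H1].
  assert (H1' : derivable_upto k (Dx f)) by (upto_le H1).
  apply derivable_upto_S in H1 as [_ H2].
  rewrite E; repeat apply derivable_upto_add; apply derivable_upto_mul_poly;
    repeat constructor; auto.
Qed.

Lemma derivable_upto_Lprod k c j f :
  derivable_upto (2 * k + j) f -> derivable_upto j (Lprod k c f).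
Proof.
  revert j; induction k as [|k IH]; intros j H; [exact H |].
  apply derivable_upto_Lsub, IH. upto_le H.
Qed.

Ltac derivable_by H :=
  match goal with
  | |- exists l, derivable_pt_lim _ ?x l =>
      first [ exact (H 0%nat ltac:(lia) x ltac:(assumption))
            | exact (H 1%nat ltac:(lia) x ltac:(assumption))
            | exact (H 2%nat ltac:(lia) x ltac:(assumption)) ]
  end.

Ltac Dx_by H := apply Dx_of_lim; eapply derivable_pt_lim_eq; [derive; derivable_by H | cbv beta].

Lemma Dx_Dm1 f : derivable_upto 2 f -> Dx (Dm1 f) =+ (fun t => Dx (Dx f) t - Dx f t).
Proof. intros H x Hx; unfold Dm1; Dx_by H; reflexivity. Qed.

Lemma Dm1_Dx_comm f : derivable_upto 2 f -> Dm1 (Dx f) =+ Dx (Dm1 f).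
Proof. intros H x Hx; rewrite (Dx_Dm1 f H x Hx); reflexivity. Qed.

Lemma Dx_Lsub c d f : derivable_upto 3 f -> Dx (Lsub c d f) =+ Lsub (c + 1) (d + 1) (Dx f).
Proof. intros H x Hx; unfold Lsub, L2; cbn [Dn]; Dx_by H; ring. Qed.

Lemma Dm1_Lsub c d f : derivable_upto 3 f -> Dm1 (Lsub c d f) =+ Lsub (c + 1) d (Dm1 f).
Proof.
  intros H x Hx.
  assert (H2 : derivable_upto 2 f) by (upto_le H).
  assert (E : Dx (Dx (Dm1 f)) x = Dx (Dx (Dx f)) x - Dx (Dx f) x).
  { rewrite (Dx_eqpos _ _ (Dx_Dm1 f H2) x Hx); Dx_by H; reflexivity. }
  unfold Dm1 at 1; rewrite (Dx_Lsub c d f H x Hx).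
  unfold Lsub, L2; cbn [Dn]; rewrite E, (Dx_Dm1 f H2 x Hx); unfold Dm1; ring.
Qed.

Lemma L2_scal c K f : derivable_upto 2 f -> L2 c (fun t => K * f t) =+ (fun t => K * L2 c f t).
Proof.
  intros H x Hx; unfold L2; cbn [Dn].
  assert (E : Dx (fun t => K * f t) =+ (fun t => K * Dx f t))
    by (intros z Hz; Dx_by H; ring).
  rewrite (Dx_eqpos _ _ E x Hx), (E x Hx).
  assert (E2 : Dx (fun t => K * Dx f t) x = K * Dx (Dx f) x) by (Dx_by H; ring).
  rewrite E2; ring.
Qed.

Lemma L2_m1 f : derivable_upto 2 f -> L2 (-1) f =+ xmul (Dx (Dm1 f)).
Proof. intros H x Hx; unfold xmul; rewrite (Dx_Dm1 f H x Hx); unfold L2; cbn [Dn]; ring. Qed.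

Lemma Dx_xmul f : derivable_pos f -> Dx (xmul f) =+ (fun t => f t + t * Dx f t).
Proof.
  intros H x Hx; unfold xmul; apply Dx_of_lim.
  eapply derivable_pt_lim_eq; [derive; now apply H | cbv beta; ring].
Qed.

Lemma Lsub_1_1 f : derivable_upto 2 f -> Lsub 1 1 f =+ Dx (Dm1 (xmul f)).
Proof.
  intros H x Hx.
  assert (E : Dm1 (xmul f) =+ (fun t => f t + t * Dx f t - t * f t)).
  { intros z Hz; unfold Dm1.
    rewrite (Dx_xmul f (derivable_upto_pos 1 _ H) z Hz); unfold xmul; ring. }
  rewrite (Dx_eqpos _ _ E x Hx); symmetry; Dx_by H; unfold Lsub, L2; cbn [Dn]; ring.
Qed.

Lemma Lsub_xmul c d f : derivable_upto 2 f ->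
  Lsub c d (xmul f) =+ (fun t => t * Lsub (c + 2) (d + 1) f t + (c + 1) * f t).
Proof.
  intros H x Hx; unfold Lsub, L2; cbn [Dn].
  pose proof (Dx_xmul f (derivable_upto_pos 1 _ H)) as E.
  rewrite (Dx_eqpos _ _ E x Hx), (E x Hx).
  assert (E2 : Dx (fun t => f t + t * Dx f t) x = Dx f x + (Dx f x + x * Dx (Dx f) x))
    by (Dx_by H; ring).
  rewrite E2; unfold xmul; ring.
Qed.

Lemma Afac_xmul j f : derivable_upto 2 f ->
  Afac j (xmul f) =+ xmul (Lsub (2 * INR j + 1) (INR j + 1) f).
Proof.
  intros H x Hx. pose proof (Lsub_xmul (2 * INR j - 1) (INR j) f H x Hx) as E.
  unfold Lsub at 1, xmul in E; unfold Afac, xmul.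
  replace (2 * INR j - 1 + 2) with (2 * INR j + 1) in E by ring.
  replace (2 * INR j / x * (x * f x)) with (2 * INR j * f x) by (field; lra).
  lra.
Qed.

Lemma Dx_xpow k u : derivable_pos u ->
  Dx (xpow k u) =+ (fun t => INR k * t ^ pred k * u t + t ^ k * Dx u t).
Proof.
  intros H x Hx; unfold xpow; apply Dx_of_lim.
  eapply derivable_pt_lim_eq; [derive; now apply H | cbv beta; ring].
Qed.

Lemma Lsub_xpow_conj k d u : derivable_upto 2 u ->
  Lsub (- INR k) d (xpow k u) =+ xpow k (Lsub (INR k) (d + INR k) u).
Proof.
  intros H x Hx; unfold Lsub, L2; cbn [Dn].
  pose proof (Dx_xpow k u (derivable_upto_pos 1 _ H)) as E.
  rewrite (Dx_eqpos _ _ E x Hx), (E x Hx).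
  assert (E2 : Dx (fun t => INR k * t ^ pred k * u t + t ^ k * Dx u t) x =
     INR k * (INR (pred k) * x ^ pred (pred k)) * u x + INR k * x ^ pred k * Dx u x
     + (INR k * x ^ pred k * Dx u x + x ^ k * Dx (Dx u) x)) by (Dx_by H; ring).
  rewrite E2; unfold xpow.
  destruct k as [|[|k]]; simpl pred; simpl INR; simpl pow; rewrite ?S_INR; ring.
Qed.

Lemma Dx_xpow_Dm1 k u : derivable_upto 2 u ->
  Dx (xpow (S k) (Dm1 u)) =+ xpow k (Lsub (INR k) (INR k + 1) u).
Proof.
  intros H x Hx.
  rewrite (Dx_xpow (S k) _ (derivable_upto_pos 0 _ (derivable_upto_Dm1 1 u H)) x Hx).
  rewrite (Dx_Dm1 u H x Hx); unfold xpow, Dm1, Lsub, L2; cbn [Dn pred pow].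
  rewrite S_INR; ring.
Qed.

Lemma Lsub_xpow k u : derivable_upto 2 u ->
  Lsub (- INR k) 1 (xpow k u) =+ Dx (xpow (S k) (Dm1 u)).
Proof.
  intros H. rewrite Lsub_xpow_conj, Dx_xpow_Dm1 by exact H.
  now rewrite Rplus_comm.
Qed.

Lemma Dn_Lsub a : forall c d h, derivable_upto (a + 2) h ->
  Dn a (Lsub c d h) =+ Lsub (c + INR a) (d + INR a) (Dn a h).
Proof.
  induction a as [|a IH]; intros c d h H; simpl Dn.
  - now rewrite !Rplus_0_r.
  - rewrite IH, Dx_Lsub by (try apply derivable_upto_Dn; upto_le H).
    now rewrite S_INR, !Rplus_assoc.
Qed.

Lemma Dm1n_Lsub b : forall c d h, derivable_upto (b + 2) h ->
  Dm1n b (Lsub c d h) =+ Lsub (c + INR b) d (Dm1n b h).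
Proof.
  induction b as [|b IH]; intros c d h H; simpl Dm1n.
  - now rewrite Rplus_0_r.
  - rewrite IH, Dm1_Lsub by (try apply derivable_upto_Dm1n; upto_le H).
    now rewrite S_INR, Rplus_assoc.
Qed.

Lemma Dm1n_Dx_comm b : forall f, derivable_upto (b + 1) f -> Dm1n b (Dx f) =+ Dx (Dm1n b f).
Proof.
  induction b as [|b IH]; intros f H; simpl Dm1n; [reflexivity |].
  rewrite IH, Dm1_Dx_comm by (try apply derivable_upto_Dm1n; upto_le H).
  reflexivity.
Qed.

Lemma Dm1_Dn_comm a : forall f, derivable_upto (a + 1) f -> Dm1 (Dn a f) =+ Dn a (Dm1 f).
Proof.
  induction a as [|a IH]; intros f H; simpl Dn; [reflexivity |].
  rewrite Dm1_Dx_comm, IH by (try apply derivable_upto_Dn; upto_le H).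
  reflexivity.
Qed.

(** * Solving [(D - 1) g = y] on the half-line *)

Lemma derivable_pt_lim_exp_opp x : derivable_pt_lim (fun t => exp (- t)) x (- exp (- x)).
Proof.
  eapply derivable_pt_lim_eq.
  - apply (derivable_pt_lim_comp Ropp exp x (-1)); [| apply derivable_pt_lim_exp].
    eapply derivable_pt_lim_eq; [apply derivable_pt_lim_opp, derivable_pt_lim_id | ring].
  - ring.
Qed.

(* [g t = e^t \int_1^t e^{-s} y s ds] satisfies [g' = g + y]. *)
Lemma Dm1_surjective N y :
  derivable_upto (S N) y -> exists g, derivable_upto (S (S N)) g /\ Dm1 g =+ y.
Proof.
  intros Hy. pose proof (derivable_upto_pos N y Hy) as Hd.
  set (h := fun t => exp (- t) * y t).
  assert (Hc : forall t, 0 < t -> continuous h t).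
  { intros t Ht. destruct (Hd t Ht) as [l Hl].
    apply continuity_pt_filterlim, derivable_continuous_pt. eexists.
    apply derivable_pt_lim_mult; [apply derivable_pt_lim_exp_opp | exact Hl]. }
  set (I := fun b => RInt h 1 b).
  assert (HI : forall x, 0 < x -> derivable_pt_lim I x (h x)).
  { intros x Hx. apply is_derive_Reals, (is_derive_RInt h I 1 x); [| now apply Hc].
    assert (Hx2 : 0 < x / 2) by lra. exists (mkposreal _ Hx2); intros b Hb.
    assert (Hb' : Rabs (b - x) < x / 2) by exact Hb. apply Rabs_def2 in Hb'.
    apply (RInt_correct (V := R_CompleteNormedModule)), ex_RInt_continuous.
    intros z [Hz _]; apply Hc. eapply Rlt_le_trans; [| exact Hz]. apply Rmin_glb_lt; lra. }
  set (g := fun t => exp t * I t).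
  assert (Hg : forall x, 0 < x -> derivable_pt_lim g x (g x + y x)).
  { intros x Hx. eapply derivable_pt_lim_eq.
    - apply derivable_pt_lim_mult; [apply derivable_pt_lim_exp | now apply HI].
    - unfold g, h. rewrite <- Rmult_assoc, <- exp_plus, Rplus_opp_r, exp_0; ring. }
  assert (Dg : Dx g =+ (fun t => g t + y t)) by (intros x Hx; apply Dx_of_lim, Hg, Hx).
  exists g; split.
  - assert (Hk : forall k, (k <= S (S N))%nat -> derivable_upto k g).
    { induction k as [|k IH]; intros Hk; [intros j Hj; lia |].
      apply derivable_upto_S; split; [intros x Hx; eexists; now apply Hg |].
      rewrite Dg; apply derivable_upto_add; [apply IH; lia |].
      upto_le Hy. }
    auto.
  - intros x Hx; unfold Dm1; rewrite (Dg x Hx); ring.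
Qed.

(** * Factorisations of the operator products *)

Lemma Lprod_0 k : forall y, derivable_upto (2 * k) y ->
  Lprod k 0 y =+ Dn k (xpow k (Dm1n k y)).
Proof.
  induction k as [|k IH]; intros y H.
  - intros x _; unfold Lprod, xpow; simpl; ring.
  - change (Lsub 0 (INR (S k)) (Lprod k 0 y) =+ Dn (S k) (xpow (S k) (Dm1n (S k) y))).
    rewrite IH by upto_le H.
    assert (HW : derivable_upto (k + 2) (xpow k (Dm1n k y)))
      by (apply derivable_upto_xpow, derivable_upto_Dm1n; upto_le H).
    transitivity (Dn k (Lsub (- INR k) 1 (xpow k (Dm1n k y)))).
    + rewrite Dn_Lsub by exact HW.
      replace (- INR k + INR k) with 0 by ring.
      now replace (1 + INR k) with (INR (S k)) by (rewrite S_INR; ring).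
    + rewrite Lsub_xpow by (apply derivable_upto_Dm1n; upto_le H).
      now rewrite <- Dn_S_inner.
Qed.

Lemma Dm1_Lprod k : forall c y, derivable_upto (2 * k + 1) y ->
  Dm1 (Lprod k c y) =+ Lprod k (c + 1) (Dm1 y).
Proof.
  induction k as [|k IH]; intros c y H; [reflexivity |].
  change (Dm1 (Lsub c (INR (S k)) (Lprod k c y)) =+
          Lsub (c + 1) (INR (S k)) (Lprod k (c + 1) (Dm1 y))).
  rewrite Dm1_Lsub by (apply derivable_upto_Lprod; upto_le H).
  rewrite IH by upto_le H; reflexivity.
Qed.

(* Moving one factor [D - 1] at a time from the right of [x^k] to its left; the
   induction on [g] needs every [y] to be of the form [(D - 1) h]. *)
Lemma Lprod_nat k : forall g, (g <= k)%nat -> forall y, derivable_upto (2 * k + 1) y ->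
  Lprod k (INR g) y =+ Dn k (Dm1n g (xpow k (Dm1n (k - g) y))).
Proof.
  induction g as [|g IH]; intros Hg y H.
  - rewrite Nat.sub_0_r; apply Lprod_0; upto_le H.
  - destruct (Dm1_surjective (2 * k) y) as [h [Hh <-]]; [upto_le H |].
    rewrite S_INR, <- Dm1_Lprod by upto_le Hh.
    rewrite IH by (lia || upto_le Hh).
    rewrite Dm1_Dn_comm by (apply derivable_upto_Dm1n, derivable_upto_xpow,
                            derivable_upto_Dm1n; upto_le Hh).
    replace (k - g)%nat with (S (k - S g)) by lia.
    now rewrite <- Dm1n_S_inner.
Qed.

Lemma Lprod_diag k y : derivable_upto (2 * k + 1) y ->
  Lprod k (INR k) y =+ Dn k (Dm1n k (xpow k y)).
Proof. intros H. rewrite Lprod_nat by (lia || exact H). now rewrite Nat.sub_diag. Qed.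

#[local] Instance RHSop_eqpos alpha : Proper (eqpos ==> eqpos) (RHSop alpha).
Proof.
  intros f g E. change (L2 (-1) (Lprod (alpha + 1) (INR alpha + 1) f) =+
                        L2 (-1) (Lprod (alpha + 1) (INR alpha + 1) g)).
  now rewrite E.
Qed.

Lemma RHSop_factor alpha y : derivable_upto (2 * alpha + 4) y ->
  RHSop alpha y =+ xmul (Dn (S (alpha + 1)) (Dm1n (S (alpha + 1)) (xpow (alpha + 1) y))).
Proof.
  intros H.
  change (L2 (-1) (Lprod (alpha + 1) (INR alpha + 1) y) =+
          xmul (Dx (Dn (alpha + 1) (Dm1 (Dm1n (alpha + 1) (xpow (alpha + 1) y)))))).
  replace (INR alpha + 1) with (INR (alpha + 1)) by (rewrite plus_INR; simpl; ring).
  rewrite L2_m1 by (apply derivable_upto_Lprod; upto_le H).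
  rewrite Lprod_diag by upto_le H.
  rewrite Dm1_Dn_comm by (apply derivable_upto_Dm1n, derivable_upto_xpow; upto_le H).
  reflexivity.
Qed.

Lemma Lsub_odd_Dn_Dm1n j h : derivable_upto (2 * j + 2) h ->
  Lsub (2 * INR j + 1) (INR j + 1) (Dn j (Dm1n j h)) =+ Dn (S j) (Dm1n (S j) (xmul h)).
Proof.
  intros H. transitivity (Dn j (Dm1n j (Lsub 1 1 h))).
  - rewrite Dm1n_Lsub, Dn_Lsub by (try apply derivable_upto_Dm1n; upto_le H).
    replace (1 + INR j + INR j) with (2 * INR j + 1) by ring.
    now replace (1 + INR j) with (INR j + 1) by ring.
  - rewrite Lsub_1_1, Dm1n_Dx_comm
      by (try apply derivable_upto_Dm1, derivable_upto_xmul; upto_le H).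
    now rewrite Dn_S_inner, Dm1n_S_inner.
Qed.

Lemma LHSop_factor alpha y : derivable_upto (2 * alpha + 4) y ->
  LHSop alpha y =+ xmul (Dn (S (alpha + 1)) (Dm1n (S (alpha + 1)) (xpow (alpha + 1) y))).
Proof.
  unfold LHSop; replace (alpha + 2)%nat with (S (alpha + 1)) by lia.
  replace (2 * alpha + 4)%nat with (2 * (alpha + 1) + 2)%nat by lia.
  generalize (alpha + 1)%nat as m; clear alpha.
  induction m as [|m IH]; intros H.
  - change (Afac 0 y =+ xmul (Dx (Dm1 (xpow 0 y)))).
    assert (E : xpow 0 y =+ y) by (intros x _; unfold xpow; simpl; ring).
    rewrite E, <- L2_m1 by upto_le H.
    intros x Hx; unfold Afac; simpl INR.
    replace (2 * 0 - 1) with (-1) by ring; field; lra.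
  - change (Afac (S m) (compop Afac 0 (S m) y) =+
            xmul (Dn (S (S m)) (Dm1n (S (S m)) (xpow (S m) y)))).
    rewrite IH by upto_le H.
    rewrite Afac_xmul
      by (apply derivable_upto_Dn, derivable_upto_Dm1n, derivable_upto_xpow; upto_le H).
    rewrite Lsub_odd_Dn_Dm1n by (apply derivable_upto_xpow; upto_le H).
    assert (E : xmul (xpow m y) =+ xpow (S m) y) by (intros x _; unfold xmul, xpow; simpl; ring).
    now rewrite E.
Qed.

(** * Laguerre polynomials as eigenfunctions *)

Lemma Lprod_eigen k c lam q : derivable_upto 2 q -> L2 c q =+ (fun t => lam * q t) ->
  Lprod k c q =+ (fun t => (-1) ^ k * poch (1 - lam) k * q t).
Proof.
  intros Hq E. induction k as [|k IH].
  - intros x _; unfold Lprod; simpl; ring.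
  - change (Lsub c (INR (S k)) (Lprod k c q) =+
            (fun t => (-1) ^ S k * poch (1 - lam) (S k) * q t)).
    rewrite IH; intros x Hx; unfold Lsub.
    rewrite (L2_scal c _ q Hq x Hx), (E x Hx), S_INR; simpl; ring.
Qed.

Lemma derivable_pt_lim_sum_pow (a : nat -> R) (e : nat -> nat) N x :
  derivable_pt_lim (fun t => sum_f_R0 (fun k => a k * t ^ e k) N) x
    (sum_f_R0 (fun k => a k * INR (e k) * x ^ pred (e k)) N).
Proof.
  induction N as [|N IH]; simpl.
  - eapply derivable_pt_lim_eq; [derive | cbv beta; ring].
  - apply derivable_pt_lim_plus; [exact IH |].
    eapply derivable_pt_lim_eq; [derive | cbv beta; ring].
Qed.

Lemma is_poly_sum_pow (a : nat -> R) N : is_poly (fun t => sum_f_R0 (fun k => a k * t ^ k) N).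
Proof. induction N; simpl; repeat constructor; auto using is_poly_pow. Qed.

Lemma sum_f_R0_telescope (u d : nat -> R) N : u 0%nat = d 0%nat ->
  (forall k, (k < N)%nat -> u (S k) = d (S k) - d k) -> sum_f_R0 u N = d N.
Proof.
  intros H0 HS; induction N as [|N IH]; simpl; auto.
  rewrite IH by (intros; apply HS; lia). rewrite HS by lia; ring.
Qed.

(* With [d k = (N - k) c_k x^k], the recurrence makes the [k]-th term of [L^gam p + N p]
   equal to [d k - d (k - 1)], so the sum telescopes to [d N = 0]. *)
Lemma L2_sum_pow_eigen (c : nat -> R) N gam :
  (forall k, (k < N)%nat -> c (S k) * INR (S k) * (INR (S k) + gam) = c k * (INR k - INR N)) ->
  L2 gam (fun t => sum_f_R0 (fun k => c k * t ^ k) N)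
    =+ (fun t => - INR N * sum_f_R0 (fun k => c k * t ^ k) N).
Proof.
  intros Hrec x Hx; unfold L2; cbn [Dn].
  assert (D1 : forall t, Dx (fun t => sum_f_R0 (fun k => c k * t ^ k) N) t =
                         sum_f_R0 (fun k => c k * INR k * t ^ pred k) N)
    by (intros t; apply Dx_of_lim, (derivable_pt_lim_sum_pow c (fun k => k))).
  rewrite (Dx_eqpos _ _ (fun t _ => D1 t) x Hx), D1.
  rewrite (Dx_of_lim _ _ _ (derivable_pt_lim_sum_pow (fun k => c k * INR k) pred N x)).
  set (d := fun k => (INR N - INR k) * c k * x ^ k).
  assert (T : sum_f_R0 (fun k => c k * INR k * INR (pred k) * x ^ pred (pred k) * x
       + c k * INR k * x ^ pred k * (gam + 1 - x) + c k * x ^ k * INR N) N = d N).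
  { apply sum_f_R0_telescope; [unfold d; simpl; ring |].
    intros k Hk. specialize (Hrec k Hk). unfold d. rewrite !S_INR in *.
    apply Rminus_diag_uniq.
    transitivity (x ^ k * (c (S k) * (INR k + 1) * (INR k + 1 + gam) - c k * (INR k - INR N))).
    - destruct k; simpl; ring.
    - rewrite Hrec; ring. }
  rewrite !plus_sum, <- !scal_sum in T. unfold d in T.
  replace (INR N - INR N) with 0 in T by ring. lra.
Qed.

Definition lag_coef (N : nat) (b : R) (k : nat) : R :=
  poch (- INR N) k / poch b k / INR (fact k).

Lemma poch_pos b k : 0 < b -> 0 < poch b k.
Proof.
  intros Hb; induction k; simpl; [lra |].
  apply Rmult_lt_0_compat; auto. pose proof (pos_INR k); lra.
Qed.

Lemma lag_coef_rec N g k : 0 < g + 1 ->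
  lag_coef N (g + 1) (S k) * INR (S k) * (INR (S k) + g) = lag_coef N (g + 1) k * (INR k - INR N).
Proof.
  intros Hg. unfold lag_coef; cbn [poch]. rewrite fact_simpl, mult_INR, S_INR.
  pose proof (poch_pos (g + 1) k Hg). pose proof (INR_fact_neq_0 k). pose proof (pos_INR k).
  field; repeat split; lra.
Qed.

Lemma laguerre_fun N g : laguerre N g = fun t =>
  poch (g + 1) N / INR (fact N) * sum_f_R0 (fun k => lag_coef N (g + 1) k * t ^ k) N.
Proof.
  apply functional_extensionality; intros t; unfold laguerre, F11_term.
  f_equal; apply sum_eq; intros; unfold lag_coef, Rdiv; ring.
Qed.

Lemma is_poly_laguerre N g : is_poly (laguerre N g).
Proof. rewrite laguerre_fun. repeat constructor. apply is_poly_sum_pow. Qed.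

Lemma L2_laguerre N g : 0 < g + 1 -> L2 g (laguerre N g) =+ (fun t => - INR N * laguerre N g t).
Proof.
  intros Hg x Hx. rewrite laguerre_fun.
  rewrite (L2_scal _ _ _ (derivable_upto_poly 2 _ (is_poly_sum_pow _ N)) x Hx).
  rewrite (L2_sum_pow_eigen _ N g (fun k _ => lag_coef_rec N g k Hg) x Hx); ring.
Qed.

Lemma calL_Tpoly alpha n : (1 <= n)%nat ->
  calL alpha (Tpoly n alpha) =+ (fun t => - poch (INR n) (alpha + 2) * Tpoly n alpha t).
Proof.
  intros Hn.
  set (q := fun t => - tcoef n alpha * laguerre (n - 1) (INR alpha + 2) t).
  assert (Hq : forall k, derivable_upto k q)
    by (intros k; apply derivable_upto_poly, is_poly_mul;
        [apply is_poly_const | apply is_poly_laguerre]).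
  assert (ET : Tpoly n alpha =+ xmul q) by (intros t _; unfold Tpoly, xmul, q; ring).
  assert (Eq : L2 (INR (alpha + 2)) q =+ (fun t => (1 - INR n) * q t)).
  { replace (INR (alpha + 2)) with (INR alpha + 2) by (rewrite plus_INR; simpl; ring).
    intros x Hx; unfold q.
    rewrite (L2_scal _ _ _ (derivable_upto_poly 2 _ (is_poly_laguerre _ _)) x Hx).
    rewrite (L2_laguerre (n - 1) (INR alpha + 2) ltac:(pose proof (pos_INR alpha); lra) x Hx).
    rewrite minus_INR by exact Hn; simpl; ring. }
  assert (Ex : xpow (alpha + 1) (xmul q) =+ xpow (alpha + 2) q)
    by (intros t _; unfold xpow, xmul; rewrite !pow_add; simpl; ring).
  intros x Hx; unfold calL.
  rewrite (RHSop_eqpos alpha _ _ ET x Hx), (ET x Hx).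
  rewrite (RHSop_factor alpha _ (derivable_upto_xmul _ _ (Hq _)) x Hx).
  replace (S (alpha + 1)) with (alpha + 2)%nat by lia.
  unfold xmul at 1; rewrite (Dn_eqpos _ _ _ (Dm1n_eqpos _ _ _ Ex) x Hx).
  rewrite <- (Lprod_diag _ _ (Hq _) x Hx), (Lprod_eigen _ _ _ _ (Hq 2%nat) Eq x Hx).
  replace (1 - (1 - INR n)) with (INR n) by ring.
  assert (Hsign : (-1) ^ (alpha + 1) * (-1) ^ (alpha + 2) = -1).
  { rewrite <- pow_add. replace (alpha + 1 + (alpha + 2))%nat with (S (2 * (alpha + 1))) by lia.
    apply pow_1_odd. }
  unfold xmul.
  transitivity ((-1) ^ (alpha + 1) * (-1) ^ (alpha + 2) * (poch (INR n) (alpha + 2) * (x * q x)));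
    [ring | rewrite Hsign; ring].
Qed.

Theorem corollary3p3 (alpha : nat) :
  (forall (y : R -> R), Ck_pos (2 * alpha + 4) y ->
     forall x, 0 < x ->
       (-1) ^ (alpha + 1) * LHSop alpha y x = (-1) ^ (alpha + 1) * RHSop alpha y x)
  /\
  (forall n : nat, (1 <= n)%nat ->
     forall x, 0 < x ->
       calL alpha (Tpoly n alpha) x + poch (INR n) (alpha + 2) * Tpoly n alpha x = 0).
Proof.
  split.
  - intros y [Hy _] x Hx. f_equal.
    rewrite (LHSop_factor alpha y Hy x Hx), (RHSop_factor alpha y Hy x Hx). reflexivity.
  - intros n Hn x Hx. rewrite (calL_Tpoly alpha n Hn x Hx). ring.
Qed.
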